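(* Let $(X,e,\mu)$ be an $\mathrm{NP}_2$-digital H-space. Then $X_e$, the connected component of $X$ containing $e$, is $\mathrm{NP}_2$-contractible.
   Context: A digital image is a finite set $X\subset\mathbb{Z}^n$ with a reflexive symmetric adjacency relation (a finite reflexive graph); continuous maps send adjacent points to adjacent points. On products, $\mathrm{NP}_2$ declares two tuples adjacent iff coordinates are adjacent in at most 2 positions and equal elsewhere. An $\mathrm{NP}_2$-homotopy from $f$ to $g:X\to Y$ is an $\mathrm{NP}_2$-continuous $H:X\times[0,m]_{\mathbb{Z}}\to Y$ with $H(\cdot,0)=f$, $H(\cdot,m)=g$; write $f\simeq_2 g$. A digital image is $\mathrm{NP}_2$-contractible if it is $\mathrm{NP}_2$-homotopy equivalent to a single point (equivalently its identity is $\mathrm{NP}_2$-homotopic to a constant map). $(f,g)(x)=(f(x),g(x))$; $c_e$ is constant at $e$. An $\mathrm{NP}_2$-digital H-space is $(X,e,\mu)$ with $\mu:X\times X\to X$ $\mathrm{NP}_2$-continuous, $\mu\circ(\mathrm{id}_X,c_e)\simeq_2\mathrm{id}_X$, $\mu\circ(c_e,\mathrm{id}_X)\simeq_2\mathrm{id}_X$ (homotopies need not be pointed). *)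

From mathcomp Require Import all_boot.
Set Implicit Arguments. Unset Strict Implicit. Unset Printing Implicit Defensive.

(* A digital image is modelled as a finite type X with an adjacency relation
   (assumed reflexive and symmetric where used): a finite reflexive graph. *)

Definition dcontinuous (X Y : Type) (adjX : rel X) (adjY : rel Y) (f : X -> Y) :=
  forall x x', adjX x x' -> adjY (f x) (f x').

(* NP_2 adjacency on a product of TWO factors: coordinates adjacent in at most
   2 positions and equal elsewhere; with two factors (and reflexive adjacency)
   this is: both coordinates adjacent (equal counts as adjacent). *)
Definition np2 (X Y : Type) (adjX : rel X) (adjY : rel Y) : rel (X * Y) :=
  fun p q => adjX p.1 q.1 && adjY p.2 q.2.

(* c_1-adjacency on the digital interval [0,m]_Z (as naturals) *)
Definition iadj : rel nat := fun i j => (i <= j.+1) && (j <= i.+1).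

Definition np2_homotopic (X Y : Type) (adjX : rel X) (adjY : rel Y) (f g : X -> Y) :=
  exists (m : nat) (H : X -> nat -> Y),
    [/\ forall x, H x 0 = f x,
        forall x, H x m = g x &
        forall x x' t t', t <= m -> t' <= m ->
          np2 adjX iadj (x, t) (x', t') -> adjY (H x t) (H x' t')].

Definition np2_homotopy_equivalent (X Y : Type) (adjX : rel X) (adjY : rel Y) :=
  exists (f : X -> Y) (g : Y -> X),
    [/\ dcontinuous adjX adjY f, dcontinuous adjY adjX g,
        np2_homotopic adjX adjX (g \o f) id &
        np2_homotopic adjY adjY (f \o g) id].

Definition point_adj : rel unit := fun _ _ => true.

Definition np2_contractible (X : Type) (adjX : rel X) :=
  np2_homotopy_equivalent adjX point_adj.

Definition np2_Hspace (X : Type) (adjX : rel X) (e : X) (mu : X * X -> X) :=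
  [/\ dcontinuous (np2 adjX adjX) adjX mu,
      np2_homotopic adjX adjX (fun x => mu (x, e)) id &
      np2_homotopic adjX adjX (fun x => mu (e, x)) id].

Definition component (X : finType) (adjX : rel X) (e : X) :=
  {x : X | connect adjX e x}.

Definition component_adj (X : finType) (adjX : rel X) (e : X)
  : rel (component adjX e) := fun a b => adjX (val a) (val b).

(* Starting from the identity, repeatedly fold a fixed point u of a retraction
   onto a distinct fixed point v adjacent to every neighbour of u in the image.
   Each fold is one step of an NP_2-homotopy and shrinks the image, so we reach
   a retraction r homotopic to the identity whose image is rigid: it has no
   dominated points.  On a rigid image, a map one homotopy step away from a map
   that r turns into the identity is itself turned into the identity by r.
   Propagating this along the homotopy mu(-, e) ~ id and then along paths from
   e gives r (mu (u, y)) = u for every y, and symmetrically r (mu (y, u)) = u,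
   so any two points u, w of the image equal r (mu (u, w)).  Hence r is a
   constant map homotopic to the identity.  The component of e inherits the
   H-space structure and is connected, which gives the theorem. *)

From mathcomp Require Import all_boot zify.

Set Implicit Arguments. Unset Strict Implicit. Unset Printing Implicit Defensive.

Lemma connect_ind (T : finType) (e : rel T) (P : T -> Prop) x y :
  P x -> (forall y z, e y z -> P y -> P z) -> connect e x y -> P y.
Proof.
move=> Px IH /connectP [p + ->]; elim: p x Px => [|z p IHp] x Px //=.
by case/andP=> exz; apply: IHp; apply: IH exz Px.
Qed.

Lemma dcontinuous_connect (T : finType) (e : rel T) (f : T -> T) x y :
  dcontinuous e e f -> connect e x y -> connect e (f x) (f y).
Proof.
move=> fc; apply: (connect_ind (P := fun y => connect e (f x) (f y))) => [|z w ezw].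
  exact: connect0.
by move/connect_trans; apply; apply/connect1/fc.
Qed.

Lemma downward_ind (P : nat -> Prop) m :
  P m -> (forall t, t < m -> P t.+1 -> P t) -> P 0.
Proof.
move=> Pm IH; suff Pk k : k <= m -> P (m - k) by rewrite -(subnn m); apply: Pk.
elim: k => [|k IHk] le_km; first by rewrite subn0.
apply: IH; first lia.
have -> : (m - k.+1).+1 = m - k by lia.
by apply: IHk; lia.
Qed.

Definition np2_homotopy (X Y : Type) (adjX : rel X) (adjY : rel Y)
    (f g : X -> Y) (m : nat) (H : X -> nat -> Y) :=
  [/\ forall x, H x 0 = f x, forall x, H x m = g x &
      forall x x' t t', t <= m -> t' <= m ->
        np2 adjX iadj (x, t) (x', t') -> adjY (H x t) (H x' t')].

Definition adjacent_maps (X Y : Type) (adjX : rel X) (adjY : rel Y)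
    (f g : X -> Y) :=
  forall x x', adjX x x' -> adjY (f x) (g x').

Section Homotopy.

Variables (X : finType) (adj : rel X).
Hypotheses (adj_refl : reflexive adj) (adj_sym : symmetric adj).
Implicit Types f g h : X -> X.

Lemma np2_homotopy_adjacent f g m H t : np2_homotopy adj adj f g m H ->
  t < m -> adjacent_maps adj adj (H^~ t) (H^~ t.+1).
Proof.
case=> _ _ Hadj lt_tm x x' axx'; apply: Hadj => //; first exact: ltnW.
by rewrite /np2 /iadj /= axx'; lia.
Qed.

Lemma np2_homotopy_connect f g m H x t : np2_homotopy adj adj f g m H ->
  t <= m -> connect adj (f x) (H x t).
Proof.
move=> hH; have [H0 _ _] := hH; elim: t => [|t IHt] le_tm; first by rewrite H0.
apply: connect_trans (IHt (ltnW le_tm)) (connect1 _).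
exact: (np2_homotopy_adjacent hH le_tm).
Qed.

Lemma np2_homotopic_connect f g x :
  np2_homotopic adj adj f g -> connect adj (f x) (g x).
Proof.
by case=> m [H hH]; have [_ <- _] := hH; apply: np2_homotopy_connect hH _.
Qed.

Lemma np2_homotopic_refl f : dcontinuous adj adj f -> np2_homotopic adj adj f f.
Proof. move=> fc; exists 0, (fun x _ => f x); by split=> // x x' t t' _ _ /andP[/fc]. Qed.

Lemma np2_homotopic_cons f g h : dcontinuous adj adj f ->
  adjacent_maps adj adj f g -> np2_homotopic adj adj g h ->
  np2_homotopic adj adj f h.
Proof.
move=> fc fg [m [H [H0 Hm Hadj]]].
exists m.+1, (fun x t => if t is s.+1 then H x s else f x); split=> //.
move=> x x' [|t] [|t'] le_t le_t' /andP[/= axx' itt']; first exact: fc.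
- have -> : t' = 0 by move: itt'; rewrite /iadj; lia.
  by rewrite H0; apply: fg.
- have -> : t = 0 by move: itt'; rewrite /iadj; lia.
  by rewrite H0 adj_sym; apply: fg; rewrite adj_sym.
- by apply: Hadj; rewrite /np2 ?axx'.
Qed.

Lemma eq_np2_homotopic f1 f2 g : f1 =1 f2 ->
  np2_homotopic adj adj f1 g -> np2_homotopic adj adj f2 g.
Proof. by move=> ef [m [H [H0 Hm Hadj]]]; exists m, H; split=> // x; rewrite H0. Qed.

Lemma np2_contractible_of_homotopic_const c :
  np2_homotopic adj adj (fun=> c) id -> np2_contractible adj.
Proof.
move=> hc; exists (fun=> tt), (fun=> c); split=> //.
by exists 0, (fun u _ => u); split=> // -[].
Qed.
End Homotopy.

Section Retraction.

Variables (Y : finType) (adj : rel Y).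
Hypotheses (adj_refl : reflexive adj) (adj_sym : symmetric adj).
Implicit Types (r f g : Y -> Y) (S : {set Y}).

Definition retraction r := dcontinuous adj adj r /\ idempotent_fun r.

Definition fixset r := [set x | r x == x].

Definition dominated S u v := [forall (w | w \in S), adj u w ==> adj v w].

Definition rigid S := {in S &, forall u v, dominated S u v -> u = v}.

(* Folding the fixed point u onto v; when u is dominated by v this is one
   homotopy step away from r. *)
Definition fold r u v x := if r x == u then v else r x.

Lemma retraction_fixset r x : retraction r -> r x \in fixset r.
Proof. by case=> _ rK; rewrite inE [r (r x)]rK. Qed.

Section Fold.

Variables (r : Y -> Y) (u v : Y).
Hypotheses (r_retr : retraction r) (v_fix : v \in fixset r) (neq_uv : u != v)
  (dom_uv : dominated (fixset r) u v).

Lemma fold_adjacent : adjacent_maps adj adj (fold r u v) r.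
Proof.
move=> x x' axx'; have [rc _] := r_retr; have rxx' := rc _ _ axx'.
rewrite /fold; case: eqP rxx' => [-> | _] // rxx'.
by move/forall_inP: dom_uv => /(_ _ (retraction_fixset x' r_retr))/implyP; apply.
Qed.

Lemma fold_retraction : retraction (fold r u v).
Proof.
have [_ rK] := r_retr; have /[!inE]/eqP rv := v_fix; split.
- move=> x x' axx'; rewrite {2}/fold; case: eqP => [rx'u|_]; last exact: fold_adjacent.
  rewrite /fold; case: eqP => // _; rewrite adj_sym.
  by have := fold_adjacent (x := x') (x' := x); rewrite /fold rx'u eqxx adj_sym; apply.
- move=> x /=; rewrite /fold; case: (r x =P u) => [_|rxu].
    by rewrite rv; case: ifP.
  by rewrite [r (r x)]rK; case: eqP.
Qed.

Lemma fixset_fold : fixset (fold r u v) = fixset r :\ u.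
Proof.
have /[!inE]/eqP rv := v_fix; apply/setP=> y; rewrite !inE /fold.
case: (r y =P u) => [ryu | nryu].
  case: (v =P y) => [vy | _]; last by rewrite ryu [u == y]eq_sym andNb.
  by move: neq_uv; rewrite -ryu -vy rv eqxx.
case: (r y =P y) => [ryy | _]; last by rewrite andbF.
by rewrite andbT; symmetry; apply/eqP => yu; apply: nryu; rewrite ryy.
Qed.

End Fold.

Lemma rigid_or_dominated r : rigid (fixset r) \/
  exists u v, [/\ u \in fixset r, v \in fixset r, u != v & dominated (fixset r) u v].
Proof.
case: (boolP [exists u in fixset r, exists v in fixset r,
                (u != v) && dominated (fixset r) u v]) => [|no_dom].
  case/exists_inP=> u uS /exists_inP[v vS /andP[nuv duv]]; right; by exists u, v.
left=> u v uS vS duv; apply/eqP; apply: contraNT no_dom => nuv.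
by apply/exists_inP; exists u => //; apply/exists_inP; exists v; rewrite ?nuv.
Qed.

Lemma rigid_retraction_homotopic_id r : retraction r -> np2_homotopic adj adj r id ->
  exists s, [/\ retraction s, rigid (fixset s) & np2_homotopic adj adj s id].
Proof.
have [n] := ubnP #|fixset r|; elim: n r => // n IHn r lt_rn r_retr r_id.
have [rig | [u [v [uS vS nuv duv]]]] := rigid_or_dominated r; first by exists r.
have fold_retr := fold_retraction r_retr vS duv.
apply: (IHn (fold r u v)) => //.
  by move: lt_rn; rewrite fixset_fold // (cardsD1 u) uS.
by apply: np2_homotopic_cons fold_retr.1 (fold_adjacent _ _) r_id.
Qed.

Lemma rigid_retraction_adjacent r f g :
  retraction r -> rigid (fixset r) -> adjacent_maps adj adj f g ->
  {in fixset r, forall u, r (g u) = u} -> {in fixset r, forall u, r (f u) = u}.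
Proof.
move=> r_retr rig fg rg u uS; symmetry; apply: rig => //.
  exact: retraction_fixset.
apply/forall_inP=> w wS; apply/implyP=> auw; rewrite -(rg w wS).
exact: r_retr.1 _ _ (fg _ _ auw).
Qed.

Lemma rigid_retraction_homotopic r f g :
  retraction r -> rigid (fixset r) -> np2_homotopic adj adj f g ->
  {in fixset r, forall u, r (g u) = u} -> {in fixset r, forall u, r (f u) = u}.
Proof.
move=> r_retr rig [m [H hH]] rg; have [H0 Hm _] := hH.
have : {in fixset r, forall u, r (H u 0) = u}.
  apply: (downward_ind (P := fun t => {in fixset r, forall u, r (H u t) = u}) (m := m)).
    by move=> u uS; rewrite Hm rg.
  move=> t lt_tm; apply: rigid_retraction_adjacent => //.
  exact: np2_homotopy_adjacent hH lt_tm.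
by move=> rH0 u uS; rewrite -H0 rH0.
Qed.

Section HSpace.

Variables (e : Y) (mu : Y * Y -> Y).
Hypotheses (Y_connected : forall y, connect adj e y)
  (mu_Hspace : np2_Hspace adj e mu).

Lemma rigid_retraction_connected r (k : Y -> Y -> Y) :
  retraction r -> rigid (fixset r) ->
  (forall u w y z, adj u w -> adj y z -> adj (k u y) (k w z)) ->
  {in fixset r, forall u, r (k u e) = u} ->
  forall y, {in fixset r, forall u, r (k u y) = u}.
Proof.
move=> r_retr rig kc ke y.
apply: (connect_ind (P := fun y => {in fixset r, forall u, r (k u y) = u}) ke)
  (Y_connected y) => z z' azz' kz.
by apply: rigid_retraction_adjacent kz => // u w auw; apply: kc; rewrite // adj_sym.
Qed.

Lemma rigid_retraction_Hspace r :
  retraction r -> rigid (fixset r) -> {in fixset r &, forall u w, u = w}.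
Proof.
move=> r_retr rig; have [mu_cont mu_idl mu_idr] := mu_Hspace.
have rid : {in fixset r, forall u, r (id u) = u} by move=> u /[!inE]/eqP.
have mul_r y : {in fixset r, forall u, r (mu (u, y)) = u}.
  apply: (rigid_retraction_connected (k := fun u y => mu (u, y))) => //.
    by move=> u w y' z auw ayz; apply: mu_cont; rewrite /np2 auw ayz.
  exact: rigid_retraction_homotopic mu_idl rid.
have mul_l y : {in fixset r, forall u, r (mu (y, u)) = u}.
  apply: (rigid_retraction_connected (k := fun u y => mu (y, u))) => //.
    by move=> u w y' z auw ayz; apply: mu_cont; rewrite /np2 auw ayz.
  exact: rigid_retraction_homotopic mu_idr rid.
by move=> u w uS wS; rewrite -[LHS](mul_r w u uS) mul_l.
Qed.

Lemma connected_Hspace_contractible : np2_contractible adj.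
Proof.
have id_retr : retraction id by split.
have [r [r_retr rig r_id]] :=
  rigid_retraction_homotopic_id id_retr (np2_homotopic_refl (f := id) (fun _ _ => id)).
apply: (@np2_contractible_of_homotopic_const _ _ adj_refl (r e)).
apply: eq_np2_homotopic r_id => x /=.
by apply: (rigid_retraction_Hspace r_retr rig); apply: retraction_fixset.
Qed.

End HSpace.

End Retraction.

Section Component.

Variables (X : finType) (adj : rel X) (e : X).
Hypotheses (adj_refl : reflexive adj) (adj_sym : symmetric adj).
Local Notation C := (component adj e).
Local Notation cadj := (@component_adj X adj e).

Definition component_root : C := exist _ e (connect0 adj e).

Lemma connect_component_root (a : C) : connect cadj component_root a.
Proof.
case: a => x ex; have /connectP[p] := ex.
elim/last_ind: p x ex => [|p y IHp] x ex /=.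
  by move=> _ xe; apply: eq_connect0; apply: val_inj; rewrite /= xe.
rewrite rcons_path last_rcons => /andP[ep ay] xy; subst x.
have el : connect adj e (last e p) by apply/connectP; exists p.
by apply: connect_trans (IHp _ el ep erefl) (connect1 _).
Qed.

Lemma np2_homotopic_component (f g : X -> X) (fC gC : C -> C) :
  (forall a, val (fC a) = f (val a)) -> (forall a, val (gC a) = g (val a)) ->
  np2_homotopic adj adj f g -> np2_homotopic cadj cadj fC gC.
Proof.
move=> fCE gCE [m [H hH]]; have [H0 Hm Hadj] := hH.
have eH (a : C) t : t <= m -> connect adj e (H (val a) t).
  move=> le_tm; apply: connect_trans (np2_homotopy_connect adj_refl _ hH le_tm).
  by rewrite -fCE; apply: valP.
(* The default [gC a] of [insubd] is never used: [eH] covers all times [t <= m]. *)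
exists m, (fun a t => insubd (gC a) (H (val a) t)); split.
- by move=> a; apply: val_inj; rewrite val_insubd eH // H0 fCE.
- by move=> a; apply: val_inj; rewrite val_insubd eH // Hm gCE.
- move=> a a' t t' le_tm le_t'm aa'; rewrite /component_adj !val_insubd !eH //.
  exact: Hadj.
Qed.

Variable mu : X * X -> X.
Hypothesis mu_Hspace : np2_Hspace adj e mu.

Lemma mul_component x y :
  connect adj e x -> connect adj e y -> connect adj e (mu (x, y)).
Proof.
have [mu_cont mu_idl _] := mu_Hspace; move=> ex ey.
have x_mul : connect adj x (mu (x, e)).
  by rewrite (sym_connect_sym adj_sym); apply: (np2_homotopic_connect adj_refl x mu_idl).
apply: connect_trans (connect_trans ex x_mul) _.
apply: (dcontinuous_connect (f := fun z => mu (x, z))) ey => z z' azz'.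
by apply: mu_cont; rewrite /np2 adj_refl.
Qed.

Definition component_mul (p : C * C) : C :=
  exist _ (mu (val p.1, val p.2)) (mul_component (valP p.1) (valP p.2)).

Lemma np2_Hspace_component : np2_Hspace cadj component_root component_mul.
Proof.
have [mu_cont mu_idl mu_idr] := mu_Hspace; split.
- by move=> [a b] [a' b'] /andP[aa' bb']; apply: mu_cont; apply/andP.
- exact: np2_homotopic_component mu_idl.
- exact: np2_homotopic_component mu_idr.
Qed.

End Component.

Theorem mainTheorem12 (X : finType) (adj : rel X)
  (adj_refl : reflexive adj) (adj_sym : symmetric adj)
  (e : X) (mu : X * X -> X) :
  np2_Hspace adj e mu ->
  np2_contractible (@component_adj X adj e).
Proof.
move=> mu_Hspace.
apply: (connected_Hspace_contractible _ _ (@connect_component_root _ _ _)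
          (np2_Hspace_component adj_refl adj_sym mu_Hspace)).
- by move=> a; apply: adj_refl.
- by move=> a b; apply: adj_sym.
Qed.
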